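(* Let $\mathcal H$ be a separable complex Hilbert space, $A\in L(\mathcal H)^+$, and $B\in L(\mathcal H)$ with closed range such that $(A,R(B))$ is compatible. Let $y\in\mathcal H$, $y\ne0$. Then $u\in\mathcal H$ is an $A$-least squares solution of $Bx=y$ if and only if there exists $T\in\Pi(A,R(B))$ with $Bu=Ty$.
   Context: $\|z\|_A=\langle Az,z\rangle^{1/2}$. $u$ is an $A$-least squares solution of $Bx=y$ if $\|y-Bu\|_A\le\|y-Bx\|_A$ for all $x\in\mathcal H$. $(A,\mathcal S)$ is compatible if there exists $Q\in L(\mathcal H)$ with $Q^2=Q$, $R(Q)=\mathcal S$, $AQ=Q^*A$. $\Pi(A,\mathcal S)$ is the set of $T\in L(\mathcal H)$ with $R(T)\subseteq\mathcal S$ and $\|w-Tw\|_A\le\|w-s\|_A$ for all $w\in\mathcal H$, $s\in\mathcal S$. *)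

From HB Require Import structures.
From mathcomp Require Import all_boot all_order all_algebra.
From mathcomp Require Import complex.
From mathcomp Require Import reals.
Set Implicit Arguments. Unset Strict Implicit. Unset Printing Implicit Defensive.
Import Order.TTheory GRing.Theory Num.Theory.
Local Open Scope ring_scope.

(* A complex Hilbert space is modelled as a left module H over the complex
   numbers C = R[i] (R : realType), equipped with an inner product
   ip : H -> H -> C (linear in the first argument, conjugate-symmetric,
   positive definite) for which H is complete w.r.t. the induced norm. *)

Section Hilbert.
Variables (R : realType) (H : lmodType R[i]) (ip : H -> H -> R[i]).

Definition inner_product : Prop :=
  [/\ (forall x y : H, ip x y = Num.conj (ip y x)),
      (forall (a : R[i]) (x y z : H), ip (a *: x + y) z = a * ip x z + ip y z),
      (forall x : H, 0 <= ip x x)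
    & (forall x : H, ip x x = 0 -> x = 0)].

Definition normH (x : H) : R := Num.sqrt (complex.Re (ip x x)).

Definition cvg_to (u : nat -> H) (x : H) : Prop :=
  forall eps : R, 0 < eps -> exists N : nat, forall n, (N <= n)%N -> normH (u n - x) < eps.

Definition cauchy_seq (u : nat -> H) : Prop :=
  forall eps : R, 0 < eps -> exists N : nat,
    forall n m, (N <= n)%N -> (N <= m)%N -> normH (u n - u m) < eps.

Definition complete_space : Prop :=
  forall u : nat -> H, cauchy_seq u -> exists x, cvg_to u x.

Definition separable_space : Prop :=
  exists d : nat -> H, forall (x : H) (eps : R), 0 < eps -> exists n, normH (x - d n) < eps.

Definition bounded_op (T : H -> H) : Prop :=
  [/\ (forall x y, T (x + y) = T x + T y),
      (forall (a : R[i]) x, T (a *: x) = a *: T x)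
    & exists M : R, forall x, normH (T x) <= M * normH x].

Definition positive_op (A : H -> H) : Prop :=
  bounded_op A /\ forall x, 0 <= ip (A x) x.

Definition range (T : H -> H) (z : H) : Prop := exists x, T x = z.

Definition closed_set (S : H -> Prop) : Prop :=
  forall (u : nat -> H) (x : H), (forall n, S (u n)) -> cvg_to u x -> S x.

Definition is_adjoint (T Ts : H -> H) : Prop :=
  forall x y, ip (T x) y = ip x (Ts y).

Definition compatible (A : H -> H) (S : H -> Prop) : Prop :=
  exists Q : H -> H,
    [/\ bounded_op Q,
        (forall x, Q (Q x) = Q x),
        (forall z, range Q z <-> S z)
      & exists Qs : H -> H,
          [/\ bounded_op Qs, is_adjoint Q Qs & forall x, A (Q x) = Qs (A x)]].

Definition Anorm (A : H -> H) (z : H) : R := Num.sqrt (complex.Re (ip (A z) z)).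

Definition A_LSS (A B : H -> H) (y u : H) : Prop :=
  forall x, Anorm A (y - B u) <= Anorm A (y - B x).

Definition PiAS (A : H -> H) (S : H -> Prop) (T : H -> H) : Prop :=
  [/\ bounded_op T,
      (forall w, S (T w))
    & forall w s, S s -> Anorm A (w - T w) <= Anorm A (w - s)].

End Hilbert.

From mathcomp Require Import all_boot all_order all_algebra.
From mathcomp Require Import complex.
From mathcomp Require Import reals.
From mathcomp Require Import ring lra.
Import Order.TTheory GRing.Theory Num.Theory.
Set Implicit Arguments. Unset Strict Implicit. Unset Printing Implicit Defensive.
Local Open Scope ring_scope.
Local Open Scope complex_scope.

(* Let Q be the projection onto R(B) with AQ = Q^*A.  Then ker Q and R(Q) are
   A-orthogonal, so Qw is an A-best approximation of w in R(B), and u is an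
   A-least squares solution iff d := Qy - Bu is A-null.  Perturbing Q by the
   rank-one operator w |-> <w,y>/<y,y> d keeps values in R(B) and changes no
   A-distance (d is A-null and lies in R(Q)), while it sends y to Bu. *)

Section InnerProductSpace.
Variables (R : realType) (H : lmodType R[i]) (ip : H -> H -> R[i]).
Hypothesis hip : inner_product ip.

Lemma ipJ x y : ip x y = Num.conj (ip y x).
Proof. by case: hip. Qed.

Lemma ip_ge0 x : 0 <= ip x x.
Proof. by case: hip. Qed.

Lemma ipDl x y z : ip (x + y) z = ip x z + ip y z.
Proof. by case: hip => _ hL _ _; have := hL 1 x y z; rewrite scale1r mul1r. Qed.

Lemma ip0l z : ip 0 z = 0.
Proof. by apply: (@addrI _ (ip 0 z)); rewrite -ipDl !addr0. Qed.

Lemma ip_eq0 x : (ip x x == 0) = (x == 0).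
Proof. by case: hip => _ _ _ hdef; apply/eqP/eqP => [/hdef // | ->]; rewrite ip0l. Qed.

Lemma ipZl a x z : ip (a *: x) z = a * ip x z.
Proof. by case: hip => _ hL _ _; have := hL a x 0 z; rewrite !addr0 ip0l addr0. Qed.

Lemma ipBl x y z : ip (x - y) z = ip x z - ip y z.
Proof. by rewrite ipDl -scaleN1r ipZl mulN1r. Qed.

Lemma ip0r z : ip z 0 = 0.
Proof. by rewrite ipJ ip0l conjC0. Qed.

Lemma ipDr x y z : ip z (x + y) = ip z x + ip z y.
Proof. by rewrite (ipJ z (x + y)) (ipJ z x) (ipJ z y) ipDl rmorphD. Qed.

Lemma ipZr a x z : ip z (a *: x) = Num.conj a * ip z x.
Proof. by rewrite (ipJ z (a *: x)) (ipJ z x) ipZl rmorphM. Qed.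

Lemma ipBr x y z : ip z (x - y) = ip z x - ip z y.
Proof. by rewrite (ipJ z (x - y)) (ipJ z x) (ipJ z y) ipBl rmorphB. Qed.

Definition sqnormH x := complex.Re (ip x x).

Lemma sqnormH_ge0 x : 0 <= sqnormH x.
Proof. by have := ip_ge0 x; rewrite lecE => /andP[]. Qed.

Lemma ip_sqnormH x : ip x x = (sqnormH x)%:C.
Proof. by rewrite RRe_real // ger0_real // ip_ge0. Qed.

Lemma ip_CauchySchwarz x y : ip x y * Num.conj (ip x y) <= ip x x * ip y y.
Proof.
have [->|y0] := eqVneq y 0; first by rewrite !ip0r mul0r mulr0.
have yy_gt0 : 0 < ip y y by rewrite lt_def ip_eq0 y0 ip_ge0.
rewrite -ler_pdivrMr // -subr_ge0.
(* the square norm of the component of x orthogonal to y *)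
have := ip_ge0 (x - (ip x y / ip y y) *: y).
have yyJ : Num.conj (ip y y) = ip y y by rewrite -ipJ.
rewrite !ipBl !ipBr !ipZl !ipZr rmorphM fmorphV /= yyJ -(ipJ y x).
by congr (0 <= _); field; rewrite gt_eqF.
Qed.

Lemma sqnormH_subr_le a b : sqnormH (a - b) <= 2 * sqnormH a + 2 * sqnormH b.
Proof.
have parallelogram :
    ip (a + b) (a + b) + ip (a - b) (a - b) = ip a a + ip a a + ip b b + ip b b.
  by rewrite !ipBl !ipDl !ipBr !ipDr; ring.
move: parallelogram => /(congr1 (@complex.Re R)); rewrite !raddfD /= -!/(sqnormH _).
by have := sqnormH_ge0 (a + b); lra.
Qed.

Lemma sqnormH_rank_one_le w y d :
  sqnormH (ip w y *: d) <= sqnormH y * sqnormH d * sqnormH w.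
Proof.
have h : ip (ip w y *: d) (ip w y *: d) <= ip w w * ip y y * ip d d.
  by rewrite ipZl ipZr mulrA ler_wpM2r ?ip_ge0 ?ip_CauchySchwarz.
by move: h; rewrite !ip_sqnormH -!rmorphM lecR -mulrA [sqnormH w * _]mulrC.
Qed.

End InnerProductSpace.

Section BoundedOperators.
Variables (R : realType) (H : lmodType R[i]) (ip : H -> H -> R[i]).
Hypothesis hip : inner_product ip.
Variable T : H -> H.
Hypothesis hT : bounded_op ip T.

Lemma bounded_opD x y : T (x + y) = T x + T y.
Proof. by case: hT. Qed.

Lemma bounded_opZ a x : T (a *: x) = a *: T x.
Proof. by case: hT. Qed.

Lemma bounded_opB x y : T (x - y) = T x - T y.
Proof. by rewrite bounded_opD -scaleN1r bounded_opZ scaleN1r. Qed.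

Lemma bounded_op0 : T 0 = 0.
Proof. by have := bounded_opB 0 0; rewrite !subrr. Qed.

Lemma bounded_op_sqnormH :
  exists2 M, 0 <= M & forall x, sqnormH ip (T x) <= M * sqnormH ip x.
Proof.
case: hT => _ _ [M hM]; exists (M ^+ 2) => [|x]; first exact: sqr_ge0.
have nTx_ge0 : 0 <= normH ip (T x) by apply: sqrtr_ge0.
have := ler_pM nTx_ge0 nTx_ge0 (hM x) (hM x).
by rewrite mulrACA -!expr2 !sqr_sqrtr ?sqnormH_ge0.
Qed.

End BoundedOperators.

Section BoundedOperatorConstructions.
Variables (R : realType) (H : lmodType R[i]) (ip : H -> H -> R[i]).
Hypothesis hip : inner_product ip.

Lemma bounded_op_of_sqnormH (S : H -> H) (M : R) :
  (forall x y, S (x + y) = S x + S y) -> (forall a x, S (a *: x) = a *: S x) ->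
  0 <= M -> (forall x, sqnormH ip (S x) <= M * sqnormH ip x) -> bounded_op ip S.
Proof.
move=> hD hZ M_ge0 hM; split=> //; exists (Num.sqrt M) => x.
by rewrite /normH -sqrtrM //; apply/ler_wsqrtr/hM.
Qed.

Lemma bounded_op_sub (S T : H -> H) :
  bounded_op ip S -> bounded_op ip T -> bounded_op ip (fun w => S w - T w).
Proof.
move=> hS hT.
have [MS MS_ge0 hMS] := bounded_op_sqnormH hip hS.
have [MT MT_ge0 hMT] := bounded_op_sqnormH hip hT.
apply: (bounded_op_of_sqnormH (M := 2 * MS + 2 * MT)) => [x y|a x||x].
- by rewrite (bounded_opD hS) (bounded_opD hT) opprD addrACA.
- by rewrite (bounded_opZ hS) (bounded_opZ hT) scalerBr.
- by rewrite addr_ge0 ?mulr_ge0.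
- apply: le_trans (sqnormH_subr_le hip _ _) _.
  have := hMS x; have := hMT x; lra.
Qed.

Lemma bounded_op_rank_one (y d : H) : bounded_op ip (fun w => ip w y *: d).
Proof.
apply: (bounded_op_of_sqnormH (M := sqnormH ip y * sqnormH ip d)) => [x z|a x||x].
- by rewrite (ipDl hip) scalerDl.
- by rewrite (ipZl hip) scalerA.
- by rewrite mulr_ge0 ?sqnormH_ge0.
- exact: sqnormH_rank_one_le.
Qed.

End BoundedOperatorConstructions.

Section CompatibleProjection.
Variables (R : realType) (H : lmodType R[i]) (ip : H -> H -> R[i]).
Hypothesis hip : inner_product ip.
Variables (A Q Qs : H -> H).
Hypotheses (hA : positive_op ip A) (hQ : bounded_op ip Q) (hQQ : forall x, Q (Q x) = Q x)
  (hadj : is_adjoint ip Q Qs) (hAQ : forall x, A (Q x) = Qs (A x)).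

Let hAlin : bounded_op ip A. Proof. by case: hA. Qed.

Lemma Aform_ge0 x : 0 <= complex.Re (ip (A x) x).
Proof. by case: hA => _ /(_ x); rewrite lecE => /andP[]. Qed.

Lemma Aform_real x : ip (A x) x = (complex.Re (ip (A x) x))%:C.
Proof. by case: hA => _ /(_ x) hx; rewrite RRe_real // ger0_real. Qed.

Lemma AformZ c x : ip (A (c *: x)) (c *: x) = c * Num.conj c * ip (A x) x.
Proof. by rewrite (bounded_opZ hAlin) (ipZl hip) (ipZr hip) mulrA. Qed.

Lemma Aorth_ker_range a b : Q a = 0 -> Q b = b -> ip (A a) b = 0 /\ ip (A b) a = 0.
Proof.
move=> Qa Qb; split.
- by rewrite -Qb (ipJ hip) hadj -hAQ Qa (bounded_op0 hAlin) (ip0r hip) conjC0.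
- by rewrite -Qb hAQ (ipJ hip) -hadj Qa (ip0l hip) conjC0.
Qed.

Lemma Aform_orthD a b : Q a = 0 -> Q b = b ->
  ip (A (a + b)) (a + b) = ip (A a) a + ip (A b) b.
Proof.
move=> Qa Qb; have [ab ba] := Aorth_ker_range Qa Qb.
by rewrite (bounded_opD hAlin) !(ipDl hip) !(ipDr hip) ab ba addr0 add0r.
Qed.

Lemma Q_subr_ker w : Q (w - Q w) = 0.
Proof. by rewrite (bounded_opB hQ) hQQ subrr. Qed.

Lemma Aform_proj_decomp w s : Q s = s ->
  complex.Re (ip (A (w - s)) (w - s)) =
  complex.Re (ip (A (w - Q w)) (w - Q w)) + complex.Re (ip (A (Q w - s)) (Q w - s)).
Proof.
move=> Qs_s; have -> : w - s = (w - Q w) + (Q w - s) by rewrite addrA subrK.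
have Qb : Q (Q w - s) = Q w - s by rewrite (bounded_opB hQ) hQQ Qs_s.
by rewrite (Aform_orthD (Q_subr_ker w) Qb) raddfD.
Qed.

Lemma Anorm_proj_le w s : Q s = s -> Anorm ip A (w - Q w) <= Anorm ip A (w - s).
Proof.
move=> Qs_s; rewrite /Anorm (Aform_proj_decomp w Qs_s) ler_sqrt.
  by rewrite lerDl Aform_ge0.
by rewrite addr_ge0 ?Aform_ge0.
Qed.

Lemma Aform_proj_null w s : Q s = s -> Anorm ip A (w - s) <= Anorm ip A (w - Q w) ->
  ip (A (Q w - s)) (Q w - s) = 0.
Proof.
move=> Qs_s; rewrite /Anorm (Aform_proj_decomp w Qs_s) ler_sqrt ?Aform_ge0 // => hle.
have hge := Aform_ge0 (Q w - s).
by rewrite Aform_real; apply/eqP; rewrite eq_complex /= eqxx andbT; apply/eqP; lra.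
Qed.

Lemma Anorm_proj_perturb w c d : Q d = d -> ip (A d) d = 0 ->
  Anorm ip A (w - (Q w - c *: d)) = Anorm ip A (w - Q w).
Proof.
move=> Qd Ad; have Qcd : Q (c *: d) = c *: d by rewrite (bounded_opZ hQ) Qd.
rewrite opprB addrA addrAC /Anorm (Aform_orthD (Q_subr_ker w) Qcd).
by rewrite AformZ Ad mulr0 addr0.
Qed.

End CompatibleProjection.

Theorem mainTheorem12 (R : realType) (H : lmodType R[i]) (ip : H -> H -> R[i])
  (hip : inner_product ip) (hcomp : complete_space ip) (hsep : separable_space ip)
  (A B : H -> H) (hA : positive_op ip A) (hB : bounded_op ip B)
  (hBcl : closed_set ip (range B)) (hcompat : compatible ip A (range B))
  (y : H) (hy : y != 0) (u : H) :
  A_LSS ip A B y u <-> exists T : H -> H, PiAS ip A (range B) T /\ B u = T y.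
Proof.
split; last by case=> T [[_ _ hopt] Bu_Ty] x; rewrite Bu_Ty; apply: hopt; exists x.
move=> hLSS; case: hcompat => Q [hQ hQQ hrng [Qs [_ hadj hAQ]]].
have QB z : range B z -> Q z = z by move=> /hrng [v <-]; rewrite hQQ.
have Bu_range : range B (B u) by exists u.
have [x Bx] : range B (Q y) by apply/hrng; exists y.
have Ae : ip (A (Q y - B u)) (Q y - B u) = 0.
  apply: (Aform_proj_null hip hA hQ hQQ hadj hAQ (QB _ Bu_range)).
  by rewrite -Bx; apply: hLSS.
set d := (ip y y)^-1 *: (Q y - B u).
have Qd : Q d = d by rewrite (bounded_opZ hQ) (bounded_opB hQ) hQQ (QB _ Bu_range).
have Ad : ip (A d) d = 0 by rewrite (AformZ hip hA) Ae mulr0.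
exists (fun w => Q w - ip w y *: d); split; last first.
  by rewrite /d scalerA divff ?(ip_eq0 hip) // scale1r subKr.
split=> [|w|w s hs].
- by have := bounded_op_sub hip hQ (bounded_op_rank_one hip y d).
- apply/hrng; exists (Q w - ip w y *: d).
  by rewrite (bounded_opB hQ) (bounded_opZ hQ) hQQ Qd.
- rewrite (Anorm_proj_perturb hip hA hQ hQQ hadj hAQ) //.
  exact: (Anorm_proj_le hip hA hQ hQQ hadj hAQ _ (QB s hs)).
Qed.
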